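(* If the dual distance $2$-VC dimension of a graph $G$ is at least $t$, then $K_t$ is a minor of $G$.
   Context: The distance hypergraph $\mathcal{H}(G)$ has vertex set $V(G)$ and, as hyperedges, all balls $B(v,r)=\{u:d(u,v)\leq r\}$ for $v\in V(G)$ and integers $r\geq0$. Its dual $\mathcal{H}(G)^*$ has the hyperedges of $\mathcal{H}(G)$ as vertices and, for each vertex $u$ of $G$, a hyperedge consisting of all balls containing $u$. In a hypergraph, a set $X$ of vertices is $2$-shattered if for every $X'\subseteq X$ with $|X'|=2$ there is a hyperedge $e$ with $e\cap X=X'$; the $2$-VC dimension is the maximum size of a $2$-shattered set. The dual distance $2$-VC dimension of $G$ is the $2$-VC dimension of $\mathcal{H}(G)^*$. Equivalently, it is at least $t$ iff there are balls $B(v_1,r_1),\dots,B(v_t,r_t)$ such that for all $i\neq j$ some vertex $x_{ij}$ satisfies $d(x_{ij},v_i)\le r_i$, $d(x_{ij},v_j)\le r_j$, and $d(x_{ij},v_m)>r_m$ for all $m\notin\{i,j\}$. *)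

From mathcomp Require Import all_boot.
Set Implicit Arguments. Unset Strict Implicit. Unset Printing Implicit Defensive.

Section Graphs.
Variable T : finType.
Variable e : rel T.

Definition simple_graph := symmetric e /\ irreflexive e.

(* ball v r = B(v,r) = { u : d(u,v) <= r }, by BFS layers:
   B(v,0) = {v}, B(v,r+1) = B(v,r) plus all neighbours of B(v,r). *)
Fixpoint ball (v : T) (r : nat) : {set T} :=
  match r with
  | 0 => [set v]
  | r'.+1 => ball v r' :|: [set u | [exists w in ball v r', e w u]]
  end.

Definition is_ball (B : {set T}) : Prop := exists v r, B = ball v r.

(* X (a set of vertices of H(G)^*, i.e. of balls) is 2-shattered in the dual
   hypergraph H(G)^*, whose hyperedges are, for each u, {B ball | u \in B}. *)
Definition dual_2shattered (X : {set {set T}}) : Prop :=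
  (forall B, B \in X -> is_ball B) /\
  forall X' : {set {set T}}, X' \subset X -> #|X'| = 2 ->
    exists u : T, [set B in X | u \in B] = X'.

Definition dual_dist_2VC_ge (t : nat) : Prop :=
  exists X : {set {set T}}, dual_2shattered X /\ t <= #|X|.

Definition connected_set (S : {set T}) : bool :=
  [forall x in S, forall y in S,
     connect [rel a b | [&& e a b, a \in S & b \in S]] x y].

Definition has_K_minor (t : nat) : Prop :=
  exists f : 'I_t -> {set T},
    (forall i, f i != set0) /\
    (forall i, connected_set (f i)) /\
    (forall i j, i != j -> [disjoint f i & f j]) /\
    (forall i j, i != j -> exists x y, [/\ x \in f i, y \in f j & e x y]).

End Graphs.

(* Let the balls B_i = B(c_i, r_i) witness the dual 2-VC dimension. Assign every
   vertex u to the index i maximising the slack r_i - d(c_i, u), ties broken by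
   index, and let the branch set of i be the vertices of B_i assigned to i.
   A step along a geodesic towards c_i raises the slack of i by one and every
   other slack by at most one, so branch sets are connected.  For i <> j take x
   lying in B_i and B_j only; it is assigned to i, say.  Walking from x towards
   c_j keeps every vertex in B_j and assigned to i or j, and c_j is not assigned
   to i (that would force B_j to lie inside B_i, which a third ball forbids when
   t >= 3), so the walk crosses an edge between the two branch sets.  For t <= 2
   one only needs an edge, and two distinct intersecting balls contain one. *)

From mathcomp Require Import all_boot zify.
Set Implicit Arguments. Unset Strict Implicit. Unset Printing Implicit Defensive.

Section Balls.
Variables (T : finType) (e : rel T).

Lemma mem_ballS v r u :
  (u \in ball e v r.+1) = (u \in ball e v r) || [exists w in ball e v r, e w u].
Proof. by rewrite /= !inE. Qed.

Lemma ball_succ v r w u : w \in ball e v r -> e w u -> u \in ball e v r.+1.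
Proof.
by move=> w_in ewu; rewrite mem_ballS; apply/orP; right; apply/existsP; exists w; rewrite w_in.
Qed.

Lemma ball_mono v r s : r <= s -> {subset ball e v r <= ball e v s}.
Proof.
move=> /subnKC <-; elim: (s - r) => [|k IHk] u; first by rewrite addn0.
by move=> /IHk u_in; rewrite addnS mem_ballS u_in.
Qed.

Lemma ball_trans v w r s u :
  w \in ball e v r -> u \in ball e w s -> u \in ball e v (r + s).
Proof.
move=> w_in; elim: s u => [|s IHs] u; first by rewrite inE addn0 => /eqP ->.
rewrite mem_ballS addnS => /orP[/IHs /ball_mono -> //|/existsP[z /andP[z_in ezu]]].
exact: ball_succ (IHs _ z_in) ezu.
Qed.

Lemma ball_edgeless v r : (forall a b, ~~ e a b) -> ball e v r = [set v].
Proof.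
move=> no_edge; elim: r => [//|r IHr]; apply/setP => u.
rewrite mem_ballS IHr orbC; case: existsP => // -[w /andP[_ ewu]].
by rewrite (negbTE (no_edge w u)) in ewu.
Qed.

Definition induced (S : {set T}) : rel T := [rel a b | [&& e a b, a \in S & b \in S]].

Lemma connected_set_from (S : {set T}) v :
  symmetric e -> (forall u, u \in S -> connect (induced S) v u) ->
  connected_set e S.
Proof.
move=> esym reach; have sym_induced : connect_sym (induced S).
  by apply: sym_connect_sym => a b; rewrite /induced /= esym [X in _ && X]andbC.
apply/forallP => x; apply/implyP => x_in; apply/forallP => y; apply/implyP => y_in.
by apply: connect_trans (reach y y_in); rewrite sym_induced; apply: reach.
Qed.

Lemma connected_set1 v : connected_set e [set v].
Proof.
apply/forallP => x; apply/implyP => /set1P ->.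
by apply/forallP => y; apply/implyP => /set1P ->; apply: connect0.
Qed.

Lemma clique_K_minor t (f : 'I_t -> T) :
  injective f -> (forall i j, i != j -> e (f i) (f j)) -> has_K_minor e t.
Proof.
move=> f_inj f_adj; exists (fun i => [set f i]); split; [|split; [|split]].
- by move=> i; apply/set0Pn; exists (f i); rewrite inE.
- by move=> i; apply: connected_set1.
- by move=> i j neq; rewrite disjoints1 inE (inj_eq f_inj).
- by move=> i j /f_adj; exists (f i), (f j); rewrite !inE !eqxx.
Qed.

Definition pair_shattered t (B : 'I_t -> {set T}) :=
  forall i j, i != j -> exists x, forall m, (x \in B m) = (m == i) || (m == j).

(* Distance from v truncated at N: exact below N, and N for vertices that are
   farther away or unreachable. *)
Variable N : nat.
Definition tdist v u := find (fun k => u \in ball e v k) (iota 0 N).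

Lemma tdist_leq v u : tdist v u <= N.
Proof. by have := find_size (fun k => u \in ball e v k) (iota 0 N); rewrite size_iota. Qed.

Lemma mem_ballE v r u : r < N -> (u \in ball e v r) = (tdist v u <= r).
Proof.
move=> lt_rN; apply/idP/idP => [u_in|le_dr].
  by rewrite leqNgt; apply/negP => /(before_find 0); rewrite nth_iota // add0n u_in.
have lt_dN : tdist v u < N by apply: leq_ltn_trans le_dr lt_rN.
have has_u : has (fun k => u \in ball e v k) (iota 0 N) by rewrite has_find size_iota.
by have := nth_find 0 has_u; rewrite nth_iota // add0n => /ball_mono; apply.
Qed.

Lemma tdist_eq0 v u : 0 < N -> (tdist v u == 0) = (u == v).
Proof. by move=> N_gt0; rewrite -leqn0 -mem_ballE // inE. Qed.

Lemma tdist_succ v w u : e w u -> tdist v u <= (tdist v w).+1.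
Proof.
move=> ewu; case: (ltnP (tdist v w).+1 N) => [lt_N|le_N].
  by rewrite -mem_ballE //; apply: ball_succ ewu; rewrite mem_ballE // ltnW.
exact: leq_trans (tdist_leq v u) le_N.
Qed.

Lemma tdist_pred v u k : tdist v u < N -> tdist v u = k.+1 ->
  exists2 w, e w u & tdist v w = k.
Proof.
move=> lt_dN du; have lt_kN : k < N by apply: ltnW; rewrite -du.
have : u \in ball e v k.+1 by rewrite mem_ballE -du.
rewrite mem_ballS mem_ballE // du ltnn => /existsP[w /andP[w_in ewu]].
exists w => //; apply/eqP; rewrite eqn_leq -mem_ballE // w_in /= -ltnS -du.
exact: tdist_succ.
Qed.

End Balls.

Lemma ord_third t (i j : 'I_t) : 2 < t -> exists k, (k != i) && (k != j).
Proof.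
move=> t_gt2; have /subsetPn[k _] : ~~ ([set: 'I_t] \subset [set i; j]).
  apply: contraTN t_gt2 => /subset_leq_card; rewrite cardsT card_ord cards2 -leqNgt.
  by case: (i != j) => // /leqW.
by rewrite !inE negb_or; exists k.
Qed.

Section Cells.
Variables (T : finType) (e : rel T).
Hypothesis esym : symmetric e.
Variables (t : nat) (c : 'I_t -> T) (r : 'I_t -> nat).

Local Notation B i := (ball e (c i) (r i)).
Let N := (\max_(i < t) r i).+1.
Local Notation d := (tdist e N).

Lemma radius_ltN i : r i < N.
Proof. by rewrite ltnS (leq_bigmax i). Qed.

Lemma mem_B m u : (u \in B m) = (d (c m) u <= r m).
Proof. exact: mem_ballE (radius_ltN m). Qed.

Definition slack m u := r m + (N - d (c m) u).

Lemma mem_B_slack m u : (u \in B m) = (N <= slack m u).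
Proof. by rewrite mem_B /slack; have := tdist_leq e N (c m) u; lia. Qed.

(* Orders the pairs (slack, index) lexicographically, so that leaders are unique. *)
Definition key m u := slack m u * t + m.

Lemma key_lt i m u : slack i u < slack m u -> key i u < key m u.
Proof.
move=> lt_im; apply: (@leq_trans ((slack i u).+1 * t)).
  by rewrite mulSn addnC ltn_add2l ltn_ord.
by rewrite (leq_trans _ (leq_addr _ _)) // leq_mul2r lt_im orbT.
Qed.

Lemma key_slack i m u : key m u <= key i u -> slack m u <= slack i u.
Proof. by apply: contraTT; rewrite -!ltnNge; apply: key_lt. Qed.

Lemma key_inj u : injective (key^~ u).
Proof.
by move=> i j /(congr1 (modn^~ t)); rewrite !modnMDl !modn_small //; apply: val_inj.
Qed.

Definition leads i u := [forall m, key m u <= key i u].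
Definition cell i := [set u in B i | leads i u].

Lemma exists_leader (i0 : 'I_t) u : exists i, leads i u.
Proof.
have [i _ max_i] := arg_maxnP (key^~ u) (isT : xpredT i0).
by exists i; apply/forallP => m; apply: max_i.
Qed.

Lemma mem_cell i j u : u \in B j -> leads i u -> u \in cell i.
Proof.
move=> u_in lead; rewrite inE lead andbT mem_B_slack.
by move: u_in; rewrite mem_B_slack => /leq_trans; apply; apply/key_slack; exact: (forallP lead j).
Qed.

Lemma B_pred i u k : u \in B i -> d (c i) u = k.+1 ->
  exists w, [/\ e w u, d (c i) w = k & w \in B i].
Proof.
move=> u_in du; have lt_dN : d (c i) u < N.
  by move: u_in; rewrite mem_B => /leq_ltn_trans; apply; apply: radius_ltN.
have [w ewu dw] := tdist_pred lt_dN du; exists w; split=> //.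
by move: u_in; rewrite !mem_B du dw => /ltnW.
Qed.

Lemma key_step i m u w : e w u -> d (c i) u = (d (c i) w).+1 ->
  key m u <= key i u -> key m w <= key i w.
Proof.
move=> ewu du le_key; have := tdist_succ N (c m) ewu.
have := tdist_leq e N (c i) u; have := tdist_leq e N (c m) w => ? ? ?.
have slack_i : slack i w = (slack i u).+1 by rewrite /slack; lia.
have slack_m : slack m w <= (slack m u).+1 by rewrite /slack; lia.
apply: (@leq_trans ((slack m u).+1 * t + m)); first by rewrite leq_add2r leq_mul2r slack_m orbT.
by rewrite /key slack_i !mulSn -!addnA leq_add2l.
Qed.

Lemma center_connect_cell i u : u \in cell i -> connect (induced e (cell i)) (c i) u.
Proof.
move dk: (d (c i) u) => k; elim: k u dk => [|k IHk] u du u_cell.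
  by move/eqP: du; rewrite tdist_eq0 ?(leq_ltn_trans _ (radius_ltN i)) // => /eqP ->.
have /setIdP[u_in /forallP lead] := u_cell.
have [w [ewu dw w_in]] := B_pred u_in du.
have w_cell : w \in cell i.
  by rewrite inE w_in; apply/forallP => m; apply: key_step ewu _ (lead m); rewrite du dw.
by apply: connect_trans (IHk w dw w_cell) (connect1 _); apply/and3P.
Qed.

Lemma cell_connected i : connected_set e (cell i).
Proof. exact: connected_set_from esym (@center_connect_cell i). Qed.

Lemma cells_disjoint i j : i != j -> [disjoint cell i & cell j].
Proof.
move=> neq; rewrite -setI_eq0; apply/eqP/setP => u; rewrite !inE.
apply/negP => /andP[/andP[_ /forallP lead_i] /andP[_ /forallP lead_j]].
by case/eqP: neq; apply: (key_inj (u := u)); apply/anti_leq; rewrite lead_i lead_j.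
Qed.

Lemma cell_crossing i j u : i != j -> c j \notin cell i ->
  u \in cell i -> u \in B j -> (forall m, m != i -> key m u <= key j u) ->
  exists a b, [/\ a \in cell i, b \in cell j & e a b].
Proof.
move=> neq cj_out; move dk: (d (c j) u) => k.
elim: k u dk => [|k IHk] u du u_cell u_in le_j.
  move/eqP: du; rewrite tdist_eq0 ?(leq_ltn_trans _ (radius_ltN j)) // => /eqP eq_u.
  by rewrite -eq_u u_cell in cj_out.
have [w [ewu dw w_in]] := B_pred u_in du.
have le_j' m : m != i -> key m w <= key j w.
  by move=> nmi; apply: key_step ewu _ (le_j m nmi); rewrite du dw.
have [l lead] := exists_leader i w.
case: (eqVneq l j) => [elj|nlj].
  by exists u, w; rewrite esym ewu u_cell -elj (mem_cell w_in lead).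
case: (eqVneq l i) => [eli|nli].
  have w_cell : w \in cell i by rewrite -eli (mem_cell w_in lead).
  exact: IHk dw w_cell w_in le_j'.
by case/eqP: nlj; apply: (key_inj (u := w)); apply/anti_leq; rewrite le_j' // (forallP lead).
Qed.

Lemma center_in_cell_subset i j : c j \in cell i -> {subset B j <= B i}.
Proof.
have N_gt0 : 0 < N by [].
case/setIdP => _ /forallP /(_ j) /key_slack; rewrite /slack.
move: (tdist_eq0 e (c j) (c j) N_gt0); rewrite eqxx => /eqP ->.
have := tdist_leq e N (c i) (c j); have := radius_ltN i => ? ? le_slack x x_in.
have cj_in : c j \in ball e (c i) (d (c i) (c j)) by rewrite (@mem_ballE _ e N) //; lia.
by apply: ball_mono (ball_trans cj_in x_in); lia.
Qed.

Section Shattered.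
Hypothesis shattered : pair_shattered (fun i => B i).
Hypothesis t_gt2 : 2 < t.

Lemma center_notin_cell i j : i != j -> c j \notin cell i.
Proof.
move=> neq; apply/negP => /center_in_cell_subset sub.
have [k /andP[nki nkj]] := ord_third i j t_gt2.
have [x memx] := shattered nkj.
by have := sub x; rewrite !memx eqxx orbT [i == k]eq_sym (negbTE nki) (negbTE neq) => /(_ isT).
Qed.

Lemma cells_adjacent_from i j x : i != j -> leads i x ->
  (forall m, (x \in B m) = (m == i) || (m == j)) ->
  exists a b, [/\ a \in cell i, b \in cell j & e a b].
Proof.
move=> neq lead memx; have x_in : x \in B i by rewrite memx eqxx.
apply: cell_crossing neq (center_notin_cell neq) (mem_cell x_in lead) _ _.
  by rewrite memx eqxx orbT.
move=> m nmi; case: (eqVneq m j) => [-> //|nmj]; apply/ltnW/key_lt.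
by have := memx m; have := memx j; rewrite !mem_B_slack eqxx orbT (negbTE nmi) (negbTE nmj); lia.
Qed.

Lemma cells_adjacent i j : i != j -> exists a b, [/\ a \in cell i, b \in cell j & e a b].
Proof.
move=> neq; have [x memx] := shattered neq; have [l lead] := exists_leader i x.
have x_in : x \in B i by rewrite memx eqxx.
have /setIdP[] := mem_cell x_in lead.
rewrite memx => /orP[/eqP eli _|/eqP elj _].
  by rewrite eli in lead; apply: cells_adjacent_from lead memx.
rewrite elj in lead; have nji : j != i by rewrite eq_sym.
have [m|a [b [a_in b_in eab]]] := cells_adjacent_from nji lead; first by rewrite memx orbC.
by exists b, a; rewrite esym.
Qed.

Lemma cells_K_minor : has_K_minor e t.
Proof.
exists cell; split; [|split; [|split]].
- move=> i; have [k /andP[nki _]] := ord_third i i t_gt2.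
  have nik : i != k by rewrite eq_sym.
  have [a [b [a_in _ _]]] := cells_adjacent nik.
  by apply/set0Pn; exists a.
- exact: cell_connected.
- exact: cells_disjoint.
- by move=> i j /cells_adjacent[a [b [? ? ?]]]; exists a, b.
Qed.

End Shattered.
End Cells.

Section Reduction.
Variables (T : finType) (e : rel T).

Lemma dual_2shattered_family (X : {set {set T}}) t :
  dual_2shattered e X -> t <= #|X| ->
  exists (c : 'I_t -> T) (r : 'I_t -> nat),
    injective (fun i => ball e (c i) (r i)) /\ pair_shattered (fun i => ball e (c i) (r i)).
Proof.
move=> [X_balls X_sh] tX.
pose Bs (i : 'I_t) : {set T} := enum_val (widen_ord tX i).
have Bs_inj : injective Bs by move=> i j /enum_val_inj/(congr1 val) ij; apply: val_inj.
have Bs_X i : Bs i \in X := enum_valP _.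
have /fin_all_exists[cr Bs_ball] : forall i, exists p : T * nat, Bs i = ball e p.1 p.2.
  by move=> i; have [v [r ->]] := X_balls _ (Bs_X i); exists (v, r).
exists (fun i => (cr i).1), (fun i => (cr i).2); split=> [i j|i j neq].
  by rewrite -!Bs_ball => /Bs_inj.
have sub : [set Bs i; Bs j] \subset X by apply/subsetP => B; rewrite !inE => /orP[]/eqP->.
have [|u u_sh] := X_sh _ sub; first by rewrite cards2 (inj_eq Bs_inj) neq.
exists u => m; rewrite -Bs_ball -!(inj_eq Bs_inj).
by have /setP/(_ (Bs m)) := u_sh; rewrite !inE Bs_X.
Qed.

Lemma small_K_minor t (c : 'I_t -> T) (r : 'I_t -> nat) :
  simple_graph e -> t <= 2 -> injective (fun i => ball e (c i) (r i)) ->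
  pair_shattered (fun i => ball e (c i) (r i)) -> has_K_minor e t.
Proof.
move=> [esym irr] t_le2 B_inj B_sh.
case: (pickP (fun p : T * T => e p.1 p.2)) => [[a b] /= eab|no_edge].
  have neq_ab : a != b by apply: contraTneq eab => ->; rewrite irr.
  apply: (clique_K_minor (f := fun i : 'I_t => if val i == 0 then a else b)) => i j /=.
  - have := ltn_ord i; have := ltn_ord j.
    case: eqP => i0; case: eqP => j0 ? ? eq_f; apply: ord_inj;
      first [lia | by move: neq_ab; rewrite eq_f eqxx].
  - move=> neq; have := ltn_ord i; have := ltn_ord j.
    case: (i =P 0 :> nat) => i0; case: (j =P 0 :> nat) => j0 ? ?;
      first [done | by rewrite esym | by case/eqP: neq; apply: ord_inj; lia].
have t_le1 : t <= 1.
  rewrite leqNgt; apply/negP => t_gt1.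
  pose i0 := Ordinal (ltnW t_gt1); pose i1 := Ordinal t_gt1.
  have [x memx] := B_sh i0 i1 isT.
  have balls1 i : ball e (c i) (r i) = [set c i].
    by apply: ball_edgeless => u v; have := no_edge (u, v) => /= ->.
  have := memx i0; have := memx i1; rewrite !balls1 !inE !eqxx orbT /= => /eqP x1 /eqP x0.
  by have := @B_inj i0 i1; rewrite /= !balls1 -x0 -x1 => /(_ erefl).
have ord_eq (i j : 'I_t) : i = j by apply: ord_inj; have := ltn_ord i; have := ltn_ord j; lia.
by apply: (clique_K_minor (f := c)) => [i j _|i j]; rewrite (ord_eq i j) ?eqxx.
Qed.

End Reduction.

Theorem theorem6 (T : finType) (e : rel T) (t : nat) :
  simple_graph e -> dual_dist_2VC_ge e t -> has_K_minor e t.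
Proof.
move=> simple [X [X_sh t_le]].
have [c [r [B_inj B_sh]]] := dual_2shattered_family X_sh t_le.
case: (ltnP 2 t) => [t_gt2|t_le2]; last exact: small_K_minor simple t_le2 B_inj B_sh.
by case: simple => esym _; apply: (cells_K_minor (c := c) (r := r) esym B_sh t_gt2).
Qed.
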